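(* There exists a nontotal pca $\mathcal{A}$ (i.e. $ab$ is undefined for some $a,b\in\mathcal{A}$) in which $0$ and $1$ are not separable.
   Context: A pca is a set $\mathcal{A}$ with partial binary application containing $k,s$ with $kab=a$, $sab\downarrow$, $sabc\simeq ac(bc)$. With $i=skk$, $\mathsf{false}=ki$, $\langle a,b\rangle=\lambda^*z.zab$ ($\lambda^*$ standard combinatory abstraction), $0=\bar 0=i$, $\overline{n+1}=\langle\mathsf{false},\bar n\rangle$, $1=\bar 1$. $0,1$ are separable in $\mathcal{A}$ if there is a total $c\in\mathcal{A}$ with $ca\in\{0,1\}$ for all $a$ such that $ca=0\Rightarrow a\neq 1$ and $ca=1\Rightarrow a\neq 0$. *)

(** Application is partial: [app a b = None]
    means [ab] is undefined.  Terms are evaluated in [option car]; Kleene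
    equality [t ≃ u] is equality of [option car] values. *)

Definition appo {A : Type} (app : A -> A -> option A)
  (x y : option A) : option A :=
  match x, y with
  | Some a, Some b => app a b
  | _, _ => None
  end.

Record pca : Type := Pca {
  car : Type;
  app : car -> car -> option car;
  k : car;
  s : car;
  k_ax : forall a b : car,
    appo app (appo app (Some k) (Some a)) (Some b) = Some a;
  s_def : forall a b : car,
    appo app (appo app (Some s) (Some a)) (Some b) <> None;
  s_ax : forall a b c : car,
    appo app (appo app (appo app (Some s) (Some a)) (Some b)) (Some c)
    = appo app (appo app (Some a) (Some c)) (appo app (Some b) (Some c))
}.

Section Combinators.
Variable P : pca.
Local Notation "x @ y" := (appo (app P) x y) (at level 40, left associativity).

Definition comb_i : option (car P) := Some (s P) @ Some (k P) @ Some (k P).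

Definition comb_false : option (car P) := Some (k P) @ comb_i.

(** <a,b> = λ* z. z a b, computed with standard combinatory abstraction:
    λ*z.z = i, λ*z.t = k t (z not in t), λ*z.(t1 t2) = s (λ*z.t1) (λ*z.t2);
    hence <a,b> = s (s i (k a)) (k b). *)
Definition comb_pair (a b : option (car P)) : option (car P) :=
  Some (s P) @ (Some (s P) @ comb_i @ (Some (k P) @ a)) @ (Some (k P) @ b).

Definition num0 : option (car P) := comb_i.
Definition num1 : option (car P) := comb_pair comb_false num0.

End Combinators.

Definition nontotal (P : pca) : Prop :=
  exists a b : car P, app P a b = None.

Definition separable01 (P : pca) : Prop :=
  exists c : car P,
    (forall a : car P, app P c a <> None) /\
    (forall a : car P,
       (app P c a = num0 P \/ app P c a = num1 P) /\
       (app P c a = num0 P -> Some a <> num1 P) /\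
       (app P c a = num1 P -> Some a <> num0 P)).

From Stdlib Require Import ClassicalEpsilon PeanoNat Lia.

(* The witness is the term model of combinatory logic generated by [k], [s] and
   infinitely many inert atoms, with application given by the (partial)
   reduction relation; applying an atom is undefined, so the pca is nontotal.
   Atoms carry no behaviour, so reduction commutes with substituting any term
   for an atom.  A total separator [c] must send an atom not occurring in [c]
   to one of the atom-free numerals [0], [1]; substituting [0] and [1] for that
   atom then shows that [c] gives the same answer on [0] and on [1], which
   contradicts separation. *)

Lemma option_eq_of_Some_iff {A : Type} (o1 o2 : option A) :
  (forall r, o1 = Some r <-> o2 = Some r) -> o1 = o2.
Proof.
  intros H; destruct o1 as [a|], o2 as [b|]; auto.
  - apply H; reflexivity.
  - discriminate (proj1 (H a) eq_refl).
  - discriminate (proj2 (H b) eq_refl).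
Qed.

Lemma appo_eq_Some {A : Type} (f : A -> A -> option A) x y r :
  appo f x y = Some r <->
  exists u v, x = Some u /\ y = Some v /\ f u v = Some r.
Proof.
  destruct x as [u|], y as [v|]; simpl; split;
    try discriminate; try (intros (? & ? & ? & ? & _); discriminate).
  - intros H; exists u, v; auto.
  - intros (u' & v' & [= <-] & [= <-] & H); exact H.
Qed.

Section FunctionalRelation.
Variables (A : Type) (R : A -> A -> A -> Prop).
Hypothesis R_det : forall x y r r', R x y r -> R x y r' -> r = r'.

Definition app_of_rel (x y : A) : option A :=
  match excluded_middle_informative (exists r, R x y r) with
  | left H => Some (proj1_sig (constructive_indefinite_description _ H))
  | right _ => None
  end.

Lemma app_of_relE x y r : app_of_rel x y = Some r <-> R x y r.
Proof.
  unfold app_of_rel; destruct excluded_middle_informative as [H|H].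
  - destruct (constructive_indefinite_description _ H) as [r0 Hr0]; simpl.
    split; [intros [= <-]; exact Hr0 | intros Hr; f_equal; eauto].
  - split; [discriminate | intros Hr; exfalso; eauto].
Qed.

End FunctionalRelation.

Inductive term : Type :=
  | K | K1 (a : term) | S | S1 (a : term) | S2 (a b : term) | atom (n : nat).

Inductive reduces : term -> term -> term -> Prop :=
  | reducesK a : reduces K a (K1 a)
  | reducesK1 a b : reduces (K1 a) b a
  | reducesS a : reduces S a (S1 a)
  | reducesS1 a b : reduces (S1 a) b (S2 a b)
  | reducesS2 a b c u v r :
      reduces a c u -> reduces b c v -> reduces u v r -> reduces (S2 a b) c r.

Lemma reduces_det x y r r' : reduces x y r -> reduces x y r' -> r = r'.
Proof.
  intros H; revert r'.
  induction H as [| | | |a b c u v r _ IHu _ IHv _ IHr]; intros r' H';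
    inversion H' as [| | | |? ? ? u' v' ? Hu' Hv' Hr']; subst; auto.
  apply IHu in Hu'; apply IHv in Hv'; subst; auto.
Qed.

Definition term_app : term -> term -> option term := app_of_rel term reduces.

Lemma term_appE x y r : term_app x y = Some r <-> reduces x y r.
Proof. exact (app_of_relE term reduces reduces_det x y r). Qed.

Lemma term_appK a : term_app K a = Some (K1 a).
Proof. apply term_appE; constructor. Qed.

Lemma term_appK1 a b : term_app (K1 a) b = Some a.
Proof. apply term_appE; constructor. Qed.

Lemma term_appS a : term_app S a = Some (S1 a).
Proof. apply term_appE; constructor. Qed.

Lemma term_appS1 a b : term_app (S1 a) b = Some (S2 a b).
Proof. apply term_appE; constructor. Qed.

Lemma term_appS2 a b c :
  term_app (S2 a b) c = appo term_app (term_app a c) (term_app b c).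
Proof.
  apply option_eq_of_Some_iff; intros r.
  rewrite appo_eq_Some, term_appE; split.
  - intros H; inversion H; subst.
    do 2 eexists; rewrite !term_appE; eauto.
  - intros (u & v & Hu & Hv & Hr); rewrite term_appE in Hu, Hv, Hr.
    econstructor; eauto.
Qed.

Lemma term_app_atom n y : term_app (atom n) y = None.
Proof.
  destruct (term_app (atom n) y) as [r|] eqn:E; auto.
  apply term_appE in E; inversion E.
Qed.

Lemma term_k_ax a b :
  appo term_app (appo term_app (Some K) (Some a)) (Some b) = Some a.
Proof. simpl; rewrite term_appK; apply term_appK1. Qed.

Lemma term_appSS a b :
  appo term_app (appo term_app (Some S) (Some a)) (Some b) = Some (S2 a b).
Proof. simpl; rewrite term_appS; apply term_appS1. Qed.

Lemma term_s_def a b :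
  appo term_app (appo term_app (Some S) (Some a)) (Some b) <> None.
Proof. rewrite term_appSS; discriminate. Qed.

Lemma term_s_ax a b c :
  appo term_app (appo term_app (appo term_app (Some S) (Some a)) (Some b)) (Some c)
  = appo term_app (appo term_app (Some a) (Some c)) (appo term_app (Some b) (Some c)).
Proof. rewrite term_appSS; apply term_appS2. Qed.

Definition term_pca : pca := Pca term term_app K S term_k_ax term_s_def term_s_ax.

Fixpoint subst_atom (m : nat) (t x : term) : term :=
  match x with
  | K => K
  | K1 a => K1 (subst_atom m t a)
  | S => S
  | S1 a => S1 (subst_atom m t a)
  | S2 a b => S2 (subst_atom m t a) (subst_atom m t b)
  | atom n => if Nat.eqb n m then t else atom n
  end.

Fixpoint atom_bound (x : term) : nat :=
  match x with
  | K | S => 0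
  | K1 a | S1 a => atom_bound a
  | S2 a b => max (atom_bound a) (atom_bound b)
  | atom n => n
  end.

Lemma subst_atom_fresh m t x : atom_bound x < m -> subst_atom m t x = x.
Proof.
  induction x as [|a IHa| |a IHa|a IHa b IHb|n]; simpl; intros H; try reflexivity.
  - rewrite IHa; auto.
  - rewrite IHa; auto.
  - rewrite IHa, IHb; auto; lia.
  - destruct (Nat.eqb_spec n m); [lia | reflexivity].
Qed.

Lemma subst_atom_atom m t : subst_atom m t (atom m) = t.
Proof. simpl; rewrite Nat.eqb_refl; reflexivity. Qed.

Lemma reduces_subst_atom m t x y r :
  reduces x y r ->
  reduces (subst_atom m t x) (subst_atom m t y) (subst_atom m t r).
Proof. induction 1; simpl; econstructor; eauto. Qed.

Lemma term_app_fresh_atom c t r m :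
  atom_bound c < m -> term_app c (atom m) = Some r ->
  term_app c t = Some (subst_atom m t r).
Proof.
  intros Hm Hr; apply term_appE in Hr; apply term_appE.
  pose proof (reduces_subst_atom m t _ _ _ Hr) as Ht.
  rewrite subst_atom_fresh, subst_atom_atom in Ht by exact Hm; exact Ht.
Qed.

Definition term_zero : term := S2 K K.

Lemma term_num0 : num0 term_pca = Some term_zero.
Proof. apply term_appSS. Qed.

Definition term_one : term :=
  S2 (S2 term_zero (K1 (K1 term_zero))) (K1 term_zero).

Lemma term_num1 : num1 term_pca = Some term_one.
Proof.
  unfold num1, comb_pair, comb_false; fold (num0 term_pca); rewrite term_num0.
  repeat progress (simpl; rewrite ?term_appK, ?term_appS, ?term_appS1).
  reflexivity.
Qed.

Theorem mainTheorem13 : exists P : pca, nontotal P /\ ~ separable01 P.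
Proof.
  exists term_pca; split.
  - exists (atom 0), (atom 0); apply term_app_atom.
  - intros [c [Htot Hsep]]; simpl in *.
    rewrite term_num0, term_num1 in Hsep.
    set (m := atom_bound c + 1).
    assert (Hm : atom_bound c < m) by (unfold m; lia).
    destruct (term_app c (atom m)) as [r|] eqn:Er; [|contradiction (Htot (atom m))].
    destruct (Hsep (atom m)) as [[H|H] _]; rewrite Er in H; injection H as ->.
    + apply (proj1 (proj2 (Hsep term_one))); auto.
      exact (term_app_fresh_atom c term_one _ m Hm Er).
    + apply (proj2 (proj2 (Hsep term_zero))); auto.
      exact (term_app_fresh_atom c term_zero _ m Hm Er).
Qed.
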